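(* Let $m(x,\xi)$ be a complex linear form on $\mathbf{C}^{2n}$ and consider the complex phase space translation $\exp(H_m)(\rho) = \rho + H_m$, $\rho \in \mathbf{C}^{2n}$. Let $\Phi$ be a strictly plurisubharmonic quadratic form on $\mathbf{C}^n$. Then $\exp(H_m)(\Lambda_{\Phi}) = \Lambda_{\Psi}$, where $\Psi$ is the strictly plurisubharmonic quadratic polynomial on $\mathbf{C}^n$ given by $$\Psi(x) = \Phi(x) + \mathrm{Im}\, \left(m\left(x,\frac{2}{i}\frac{\partial \Phi}{\partial x}(x)\right)\right),\quad x \in \mathbf{C}^n.$$
   Context: For a complex linear form $m(x,\xi)=m'_x\cdot x+m'_\xi\cdot\xi$ on $\mathbf{C}^{2n}$, its Hamilton vector field is the constant vector $H_m=(m'_\xi,-m'_x)\in\mathbf{C}^{2n}$. For a real-valued polynomial $\Phi$ on $\mathbf{C}^n$, $\Lambda_{\Phi} = \{(x,\frac{2}{i}\frac{\partial \Phi}{\partial x}(x)) : x\in \mathbf{C}^n\}\subset\mathbf{C}^{2n}$, with $\partial/\partial x$ the holomorphic derivative. *)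

From HB Require Import structures.
From mathcomp Require Import all_boot all_order all_algebra.
From mathcomp Require Import all_classical all_reals all_analysis.
From mathcomp Require Import complex.
Set Implicit Arguments. Unset Strict Implicit. Unset Printing Implicit Defensive.
Import Order.TTheory GRing.Theory Num.Theory.
Local Open Scope ring_scope.

Section Defs.
Variables (R : realType) (n : nat).
Local Notation C := (R[i]).
Local Notation Cn := 'rV[C]_n.

Definition evec (j : 'I_n) : Cn := \row_k (if k == j then 1 else 0).

Definition rdir (f : Cn -> C) (x v : Cn) : C :=
  (derive1 (fun t : R => complex.Re (f (x + (t%:C)%C *: v))) 0)%:C%C
  + 'i%C * (derive1 (fun t : R => complex.Im (f (x + (t%:C)%C *: v))) 0)%:C%C.

(* Wirtinger derivatives d/dx_j = (d/dRe x_j - i d/dIm x_j)/2,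
   d/dxbar_j = (d/dRe x_j + i d/dIm x_j)/2 *)
Definition dx (j : 'I_n) (f : Cn -> C) : Cn -> C := fun x =>
  (rdir f x (evec j) - 'i%C * rdir f x ('i%C *: evec j)) / 2%:R.
Definition dxbar (j : 'I_n) (f : Cn -> C) : Cn -> C := fun x =>
  (rdir f x (evec j) + 'i%C * rdir f x ('i%C *: evec j)) / 2%:R.

Definition hgrad (Phi : Cn -> R) (x : Cn) : Cn :=
  \row_j dx j (fun y => (Phi y)%:C%C) x.

Definition Lambda (Phi : Cn -> R) : set (Cn * Cn) :=
  [set p | exists x : Cn, p = (x, (2%:R / 'i%C) *: hgrad Phi x)].

Definition realify (x : Cn) : 'rV[R]_(n + n) :=
  row_mx (map_mx (@complex.Re R) x) (map_mx (@complex.Im R) x).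

Definition is_real_quad_form (Phi : Cn -> R) : Prop :=
  exists Q : 'M[R]_(n + n),
    forall x, Phi x = (realify x *m Q *m (realify x)^T) 0 0.

Definition is_real_quad_poly (Phi : Cn -> R) : Prop :=
  exists (Q : 'M[R]_(n + n)) (l : 'rV[R]_(n + n)) (c : R),
    forall x, Phi x = (realify x *m Q *m (realify x)^T) 0 0
                      + (l *m (realify x)^T) 0 0 + c.

Definition strictly_psh (Phi : Cn -> R) : Prop :=
  forall (x v : Cn), v != 0 ->
    0 < \sum_(j < n) \sum_(k < n)
          dx j (dxbar k (fun y => (Phi y)%:C%C)) x * v 0 j * (v 0 k)^*%C.

Definition linform (a b : Cn) (x xi : Cn) : C :=
  \sum_(j < n) a 0 j * x 0 j + \sum_(j < n) b 0 j * xi 0 j.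

(* its Hamilton vector field H_m = (m'_xi, - m'_x) = (b, -a) *)
Definition Ham (a b : Cn) : Cn * Cn := (b, - a).

Definition expH (a b : Cn) (rho : Cn * Cn) : Cn * Cn :=
  (rho.1 + (Ham a b).1, rho.2 + (Ham a b).2).

End Defs.

From HB Require Import structures.
From mathcomp Require Import all_boot all_order all_algebra.
From mathcomp Require Import all_classical all_reals all_analysis.
From mathcomp Require Import complex.
From mathcomp Require Import ring.
Import Order.TTheory GRing.Theory Num.Theory.
Local Open Scope ring_scope.
Local Open Scope classical_set_scope.
Set Implicit Arguments. Unset Strict Implicit. Unset Printing Implicit Defensive.

(** Write [Phi = q] for a real quadratic form [q] on [C^n = R^2n], with
    polarization [dq x v = q (x + v) - q x - q v], the real differential of
    [q] at [x].  The holomorphic gradient of a function whose differential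
    is the real-linear form [D] is [(D e_k - i D (i e_k)) / 2], so
    [(2/i) d_x Phi] is real-linear in [x] and
    [Im (b . (2/i) d_x Phi (x)) = - dq x b].  Hence
    [Psi = q + l] with [l x = Im (a . x) - dq x b] real-linear: [Psi] is a
    quadratic polynomial with the same Levi form as [Phi], and since
    [(2/i) d_x] of [x |-> Im (a . x)] is [-a] and [dq] is symmetric,
    [(2/i) d_x Psi (x + b) = (2/i) d_x Phi (x) - a], which says that the
    translation by [H_m = (b, -a)] maps [Lambda_Phi] onto [Lambda_Psi]. *)

Local Notation Re := complex.Re.
Local Notation Im := complex.Im.

Section ComplexParts.
Variable R : realType.
Implicit Types (x y : R[i]) (k : R).

Lemma complex_ext x y : Re x = Re y -> Im x = Im y -> x = y.
Proof. by case: x => ? ?; case: y => ? ? /= -> ->. Qed.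

Lemma ReD x y : Re (x + y) = Re x + Re y. Proof. by case: x; case: y. Qed.
Lemma ImD x y : Im (x + y) = Im x + Im y. Proof. by case: x; case: y. Qed.
Lemma ReN x : Re (- x) = - Re x. Proof. by case: x. Qed.
Lemma ImN x : Im (- x) = - Im x. Proof. by case: x. Qed.
Lemma ReM x y : Re (x * y) = Re x * Re y - Im x * Im y.
Proof. by case: x; case: y. Qed.
Lemma ImM x y : Im (x * y) = Re x * Im y + Im x * Re y.
Proof. by case: x => ? ?; case: y => ? ? /=; rewrite addrC. Qed.
Lemma Re_real k : Re (k%:C)%C = k. Proof. by []. Qed.
Lemma Im_real k : Im (k%:C)%C = 0. Proof. by []. Qed.
Lemma Re_i : Re 'i%C = 0 :> R. Proof. by []. Qed.
Lemma Im_i : Im 'i%C = 1 :> R. Proof. by []. Qed.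
Lemma Re0 : Re (0 : R[i]) = 0. Proof. by []. Qed.
Lemma Im0 : Im (0 : R[i]) = 0. Proof. by []. Qed.

Lemma real_complex_nat (m : nat) : (m%:R : R[i]) = (m%:R : R)%:C%C.
Proof. by rewrite rmorph_nat. Qed.

Lemma Re_half x : Re (x / 2%:R) = Re x / 2.
Proof. by rewrite real_complex_nat -fmorphV ReM Im_real mulr0 subr0. Qed.
Lemma Im_half x : Im (x / 2%:R) = Im x / 2.
Proof. by rewrite real_complex_nat -fmorphV ImM Im_real mulr0 add0r. Qed.

Lemma two_div_i : 2%:R / 'i%C = (0 +i* (-2))%C :> R[i].
Proof.
have i_neq0 : 'i%C != 0 :> R[i] by apply/eqP => -[] /eqP; rewrite oner_eq0.
apply: (mulIf i_neq0); rewrite divfK //.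
by apply: complex_ext; rewrite ?ReM ?ImM real_complex_nat /=; ring.
Qed.
Lemma Re_two_div_i : Re (2%:R / 'i%C : R[i]) = 0. Proof. by rewrite two_div_i. Qed.
Lemma Im_two_div_i : Im (2%:R / 'i%C : R[i]) = -2. Proof. by rewrite two_div_i. Qed.

End ComplexParts.

Definition ReImE := (Re_two_div_i, Im_two_div_i, Re_half, Im_half, ReD, ImD,
  ReN, ImN, ReM, ImM, Re_i, Im_i, Re0, Im0, Re_real, Im_real).

Ltac complex_ring :=
  apply: complex_ext; rewrite !ReImE; field.

Lemma derive1_quadratic_at0 (R : realType) (A B C : R) :
  derive1 (fun t : R => A + t * B + t ^+ 2 * C) 0 = B.
Proof.
have D : is_derive (0 : R) 1 (fun t : R => A + t * B + t ^+ 2 * C) B.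
  apply: is_derive_eq.
  by rewrite /= expr0n /= !(scaler0, scale0r, add0r, addr0, mul1r) -[RHS]mulr1.
by rewrite derive1E derive_val.
Qed.

Section RealStructure.
Variables (R : realType) (n : nat).
Local Notation C := (R[i]).
Local Notation Cn := 'rV[C]_n.
Local Notation e := (@evec R n).
Implicit Types (x v w : Cn) (t : R).

Definition real_linear (l : Cn -> R) :=
  forall x v t, l (x + (t%:C)%C *: v) = l x + t * l v.

Lemma real_linear0 l : real_linear l -> l 0 = 0.
Proof.
move=> L; have := L 0 0 1; rewrite scaler0 addr0 mul1r => l00.
by apply: (addrI (l 0)); rewrite addr0 -l00.
Qed.

Lemma real_linear_zero : real_linear (fun _ => 0).
Proof. by move=> *; rewrite mulr0 addr0. Qed.

Lemma real_linearD l : real_linear l -> forall x w, l (x + w) = l x + l w.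
Proof. by move=> L x w; have := L x w 1; rewrite rmorph1 scale1r mul1r. Qed.

Lemma real_linearZ l : real_linear l -> forall t w, l ((t%:C)%C *: w) = t * l w.
Proof. by move=> L t w; have := L 0 w t; rewrite (real_linear0 L) !add0r. Qed.

Lemma row_real_basis x : x = \sum_(j < n)
  ((Re (x 0 j))%:C%C *: e j + (Im (x 0 j))%:C%C *: ('i%C *: e j)).
Proof.
apply/rowP => k; rewrite summxE (bigD1 k) //= big1 => [|j /negbTE jk].
  by rewrite !mxE eqxx addr0 {1}[x 0 k]complexE; complex_ring.
by rewrite !mxE eq_sym jk; complex_ring.
Qed.

Lemma real_linear_expand l : real_linear l -> forall x,
  l x = \sum_(j < n) (Re (x 0 j) * l (e j) + Im (x 0 j) * l ('i%C *: e j)).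
Proof.
move=> L x; rewrite {1}(row_real_basis x).
rewrite (big_morph l (real_linearD L) (real_linear0 L)); apply: eq_bigr => j _.
by rewrite real_linearD // !real_linearZ.
Qed.

Lemma real_linear_mxE l : real_linear l -> forall x,
  l x = (row_mx (\row_j l (e j)) (\row_j l ('i%C *: e j)) *m (realify x)^T) 0 0.
Proof.
move=> L x; rewrite (real_linear_expand L x) /realify tr_row_mx mul_row_col.
by rewrite !mxE big_split; congr (_ + _); apply: eq_bigr => j _; rewrite !mxE mulrC.
Qed.

Definition cdot (a x : Cn) : C := \sum_(j < n) a 0 j * x 0 j.

Lemma linformE (a b x xi : Cn) : linform a b x xi = cdot a x + cdot b xi.
Proof. by []. Qed.

Lemma real_linear_Im_cdot a : real_linear (fun x => Im (cdot a x)).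
Proof.
move=> x v t; rewrite /cdot !(big_morph _ (@ImD R) (@Im0 R)) mulr_sumr.
by rewrite -big_split /=; apply: eq_bigr => j _; rewrite !mxE !ReImE; ring.
Qed.

Lemma cdot_evec a j : cdot a (e j) = a 0 j.
Proof.
rewrite /cdot (bigD1 j) //= big1 => [|k /negbTE kj]; rewrite !mxE ?kj ?eqxx.
  by rewrite mulr1 addr0.
by rewrite mulr0.
Qed.

Lemma cdot_i_evec a j : cdot a ('i%C *: e j) = 'i%C * a 0 j.
Proof.
rewrite /cdot (bigD1 j) //= big1 => [|k /negbTE kj]; rewrite !mxE ?kj ?eqxx.
  by rewrite mulr1 addr0 mulrC.
by rewrite !mulr0.
Qed.

Lemma realifyD x w : realify (x + w) = realify x + realify w.
Proof.
by rewrite /realify add_row_mx; congr row_mx; apply/matrixP => i j; rewrite !mxE ReImE.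
Qed.

Lemma realifyZ t w : realify ((t%:C)%C *: w) = t *: realify w.
Proof.
rewrite /realify scale_row_mx; congr row_mx; apply/matrixP => i j;
  by rewrite !mxE !ReImE mul0r ?subr0 ?addr0.
Qed.

End RealStructure.

Section QuadraticForm.
Variables (R : realType) (n : nat).
Local Notation Cn := 'rV[R[i]]_n.
Variable Q : 'M[R]_(n + n).
Implicit Types (x v w : Cn) (t : R).

Definition bilin (p q : 'rV[R]_(n + n)) := (p *m Q *m q^T) 0 0.

Lemma bilinDl p p' q : bilin (p + p') q = bilin p q + bilin p' q.
Proof. by rewrite /bilin !mulmxDl mxE. Qed.
Lemma bilinDr p q q' : bilin p (q + q') = bilin p q + bilin p q'.
Proof. by rewrite /bilin linearD /= mulmxDr mxE. Qed.
Lemma bilinZl t p q : bilin (t *: p) q = t * bilin p q.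
Proof. by rewrite /bilin -!scalemxAl mxE. Qed.
Lemma bilinZr t p q : bilin p (t *: q) = t * bilin p q.
Proof. by rewrite /bilin linearZ /= -scalemxAr mxE. Qed.

Definition qform x := bilin (realify x) (realify x).

(** [qpolar x] is the real differential of [qform] at [x]. *)
Definition qpolar x w := bilin (realify x) (realify w) + bilin (realify w) (realify x).

Lemma qpolarC x w : qpolar x w = qpolar w x.
Proof. by rewrite /qpolar addrC. Qed.

Lemma qpolar_linel x v w t :
  qpolar (x + (t%:C)%C *: v) w = qpolar x w + t * qpolar v w.
Proof. rewrite /qpolar realifyD realifyZ bilinDl bilinDr bilinZl bilinZr; ring. Qed.

Lemma real_linear_qpolar x : real_linear (qpolar x).
Proof. by move=> y v t; rewrite !(qpolarC x) qpolar_linel. Qed.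

Lemma qform_line x v t :
  qform (x + (t%:C)%C *: v) = qform x + t * qpolar x v + t ^+ 2 * qform v.
Proof.
rewrite /qform /qpolar realifyD realifyZ !(bilinDl, bilinDr, bilinZl, bilinZr); ring.
Qed.

End QuadraticForm.

Section Wirtinger.
Variables (R : realType) (n : nat).
Local Notation C := (R[i]).
Local Notation Cn := 'rV[C]_n.
Local Notation e := (@evec R n).

Lemma rdir_quadratic_line (G : Cn -> C) x v (G1 G2 : C) :
  (forall t : R, G (x + (t%:C)%C *: v) = G x + (t%:C)%C * G1 + (t ^+ 2)%:C%C * G2) ->
  rdir G x v = G1.
Proof.
move=> line; rewrite /rdir.
have -> : (fun t : R => Re (G (x + (t%:C)%C *: v))) =
    (fun t => Re (G x) + t * Re G1 + t ^+ 2 * Re G2).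
  by apply: funext => t; rewrite line !ReImE; ring.
have -> : (fun t : R => Im (G (x + (t%:C)%C *: v))) =
    (fun t => Im (G x) + t * Im G1 + t ^+ 2 * Im G2).
  by apply: funext => t; rewrite line !ReImE; ring.
by rewrite !derive1_quadratic_at0 [RHS]complexE.
Qed.

(** Wirtinger derivatives of a function whose real differential is [D]. *)
Definition wdx (D : Cn -> R) (k : 'I_n) : C :=
  ((D (e k))%:C%C - 'i%C * (D ('i%C *: e k))%:C%C) / 2%:R.
Definition wdxbar (D : Cn -> R) (k : 'I_n) : C :=
  ((D (e k))%:C%C + 'i%C * (D ('i%C *: e k))%:C%C) / 2%:R.

Lemma wdxD (D1 D2 : Cn -> R) k :
  wdx (fun v => D1 v + D2 v) k = wdx D1 k + wdx D2 k.
Proof. by rewrite /wdx; complex_ring. Qed.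

Lemma Im_cdot_wdx (D : Cn -> R) (b : Cn) : real_linear D ->
  Im (cdot b ((2%:R / 'i%C) *: \row_k wdx D k)) = - D b.
Proof.
move=> L; rewrite (real_linear_expand L b) /cdot -sumrN.
rewrite (big_morph _ (@ImD R) (@Im0 R)); apply: eq_bigr => j _.
by rewrite !mxE /wdx !ReImE; field.
Qed.

Lemma wdx_Im_cdot (a : Cn) k :
  (2%:R / 'i%C) * wdx (fun x => Im (cdot a x)) k = - a 0 k.
Proof. by rewrite /wdx cdot_evec cdot_i_evec; complex_ring. Qed.

End Wirtinger.

Section QuadraticPolynomial.
Variables (R : realType) (n : nat).
Local Notation C := (R[i]).
Local Notation Cn := 'rV[C]_n.
Local Notation e := (@evec R n).
Variables (Q : 'M[R]_(n + n)) (l : Cn -> R) (Phi : Cn -> R).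
Hypothesis l_linear : real_linear l.
Hypothesis PhiE : forall y, Phi y = qform Q y + l y.

Lemma rdir_qpoly x v :
  rdir (fun y => (Phi y)%:C%C) x v = (qpolar Q x v + l v)%:C%C.
Proof.
apply: (rdir_quadratic_line (G2 := (qform Q v)%:C%C)) => t.
by rewrite !PhiE qform_line l_linear -!rmorphM -!rmorphD; congr (_%:C)%C; ring.
Qed.

Lemma dx_qpoly k x : dx k (fun y => (Phi y)%:C%C) x = wdx (fun v => qpolar Q x v + l v) k.
Proof. by rewrite /dx !rdir_qpoly. Qed.

Lemma dxbar_qpoly k x :
  dxbar k (fun y => (Phi y)%:C%C) x = wdxbar (fun v => qpolar Q x v + l v) k.
Proof. by rewrite /dxbar !rdir_qpoly. Qed.

Lemma hgrad_qpoly x : hgrad Phi x = \row_k wdx (fun v => qpolar Q x v + l v) k.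
Proof. by apply/rowP => k; rewrite !mxE dx_qpoly. Qed.

Lemma dx_dxbar_qpoly j k x :
  dx j (dxbar k (fun y => (Phi y)%:C%C)) x =
  (wdxbar (qpolar Q (e j)) k - 'i%C * wdxbar (qpolar Q ('i%C *: e j)) k) / 2%:R.
Proof.
have rdir_dxbar v : rdir (dxbar k (fun y => (Phi y)%:C%C)) x v = wdxbar (qpolar Q v) k.
  apply: (rdir_quadratic_line (G2 := 0)) => t.
  by rewrite !dxbar_qpoly /wdxbar !qpolar_linel; complex_ring.
by rewrite /dx !rdir_dxbar.
Qed.

Lemma qpoly_is_real_quad_poly : is_real_quad_poly Phi.
Proof.
exists Q, (row_mx (\row_j l (e j)) (\row_j l ('i%C *: e j))), 0 => x.
by rewrite addr0 PhiE -real_linear_mxE.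
Qed.

End QuadraticPolynomial.

Lemma strictly_psh_qpoly (R : realType) (n : nat) (Q : 'M[R]_(n + n))
    (l1 l2 Phi1 Phi2 : 'rV[R[i]]_n -> R) :
  real_linear l1 -> (forall y, Phi1 y = qform Q y + l1 y) ->
  real_linear l2 -> (forall y, Phi2 y = qform Q y + l2 y) ->
  strictly_psh Phi1 -> strictly_psh Phi2.
Proof.
move=> L1 Phi1E L2 Phi2E psh1 x v v_neq0.
have same_levi j k : dx j (dxbar k (fun y => (Phi2 y)%:C%C)) x =
    dx j (dxbar k (fun y => (Phi1 y)%:C%C)) x.
  by rewrite (dx_dxbar_qpoly L2 Phi2E) (dx_dxbar_qpoly L1 Phi1E).
under eq_bigr do under eq_bigr do rewrite same_levi.
exact: psh1.
Qed.

Lemma expH_Lambda (R : realType) (n : nat) (a b : 'rV[R[i]]_n)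
    (Phi Psi : 'rV[R[i]]_n -> R) :
  (forall x, (2%:R / 'i%C) *: hgrad Psi (x + b) = (2%:R / 'i%C) *: hgrad Phi x - a) ->
  expH a b @` Lambda Phi = Lambda Psi.
Proof.
move=> shift; rewrite eqEsubset; split.
- by move=> _ [_ [x ->] <-]; exists (x + b); rewrite shift.
- move=> _ [y ->]; exists (y - b, (2%:R / 'i%C) *: hgrad Phi (y - b)).
    by exists (y - b).
  by rewrite /expH /Ham /= -shift subrK.
Qed.

Section Translation.
Variables (R : realType) (n : nat).
Local Notation Cn := 'rV[R[i]]_n.
Variables (Q : 'M[R]_(n + n)) (Phi : Cn -> R) (a b : Cn).
Hypothesis PhiE : forall y, Phi y = qform Q y.

Let PhiE0 y : Phi y = qform Q y + (fun _ => 0 : R) y.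
Proof. by rewrite addr0. Qed.

Lemma hgrad_qform x : hgrad Phi x = \row_k wdx (qpolar Q x) k.
Proof.
rewrite (hgrad_qpoly (@real_linear_zero R n) PhiE0).
by apply/rowP => k; rewrite !mxE /wdx !addr0.
Qed.

Definition shift_part x := Im (cdot a x) - qpolar Q x b.

Lemma real_linear_shift_part : real_linear shift_part.
Proof.
move=> x v t; rewrite /shift_part real_linear_Im_cdot qpolar_linel; ring.
Qed.

Lemma Im_linform_hgrad_qform x :
  Im (linform a b x ((2%:R / 'i%C) *: hgrad Phi x)) = shift_part x.
Proof.
rewrite linformE ImD hgrad_qform Im_cdot_wdx //; exact: real_linear_qpolar.
Qed.

Lemma hgrad_translate (Psi : Cn -> R) :
  (forall y, Psi y = qform Q y + shift_part y) ->
  forall x, (2%:R / 'i%C) *: hgrad Psi (x + b) = (2%:R / 'i%C) *: hgrad Phi x - a.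
Proof.
move=> PsiE x; rewrite (hgrad_qpoly real_linear_shift_part PsiE) hgrad_qform.
have -> : (fun v => qpolar Q (x + b) v + shift_part v) =
    (fun v => qpolar Q x v + Im (cdot a v)).
  apply: funext => v; rewrite /shift_part.
  have := qpolar_linel Q x b v 1; rewrite scale1r mul1r => ->.
  by rewrite (qpolarC Q b v); ring.
by apply/rowP => k; rewrite !mxE wdxD mulrDr wdx_Im_cdot.
Qed.

End Translation.

Theorem lemma2p2 (R : realType) (n : nat) (a b : 'rV[R[i]]_n)
    (Phi : 'rV[R[i]]_n -> R) :
  is_real_quad_form Phi -> strictly_psh Phi ->
  let Psi := fun x : 'rV[R[i]]_n =>
    Phi x + complex.Im (linform a b x ((2%:R / 'i%C) *: hgrad Phi x)) in
  [/\ is_real_quad_poly Psi, strictly_psh Psi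
    & expH a b @` Lambda Phi = Lambda Psi].
Proof.
move=> [Q PhiE] Phi_psh Psi.
have PsiE y : Psi y = qform Q y + shift_part Q a b y.
  by rewrite /Psi (Im_linform_hgrad_qform a b PhiE) PhiE.
have shift_linear := real_linear_shift_part Q a b.
split.
- exact: qpoly_is_real_quad_poly shift_linear PsiE.
- apply: strictly_psh_qpoly (@real_linear_zero R n) _ shift_linear PsiE Phi_psh.
  by move=> y; rewrite PhiE addr0.
- exact: expH_Lambda (hgrad_translate PhiE PsiE).
Qed.
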